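(* Let $D$ be a document with phrase sequence $S_D=[s_1,\dots,s_n]$ and visual pattern function $p$. Let $GT=(V^*,E^* )$ be the true SHT of $D$; assume $GT$ is a candidate SHT whose root corresponds to $s_1$, and assume $GT$ is well-formatted. Assume further that the header-identification step is correct, i.e., the set of phrases retained after pruning clusters is exactly the set of phrases corresponding to the nodes of $GT$. Then the tree returned by \texttt{oracle\_gen}$(D)$ equals $GT$: it has the same node set and the same parent-child edges.
   Context: A document $D$ is represented by a sequence of phrases $S_D=[s_1,\dots,s_n]$ (maximal runs of consecutive words with identical font size, name, and type). Each phrase $s$ has a visual pattern $p(s)$, a vector of formatting features (font size, font name, font type, whether all-capitalized, whether it starts with a number, whether it starts with a letter, whether it is centered); two phrases have the same pattern iff these vectors are equal. A candidate SHT (semantic hierarchical tree) for $D$ is a single-rooted, ordered, connected directed tree $T=(V,E)$ in which each node $v$ corresponds to a distinct phrase $s_{ind(v)}\in S_D$ (its phrase index $ind(v)$), such that $ind(v)<ind(v')$ for every child $v'$ of $v$ and $ind(v)<ind(v')$ for every right sibling $v'$ of $v$ (so preorder traversal visits nodes in increasing phrase index). Write $p(v)=p(s_{ind(v)})$. For a node $v$ of a tree $T$, $next(v)$ is the phrase index of its immediate right sibling if it exists, otherwise that of the immediate right sibling of the closest ancestor having one; if no ancestor of $v$ has a right sibling, $next(v)=n$. The text span of $v$ is $ts(v)=[ind(v),\,next(v)-1]$ (a set of phrase indices). The granularity of $v$ is its depth (root has depth 1). Well-formatted: for a node $v$, the visual prefix $vispre(v)$ is the sequence of visual patterns of the nodes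 on the path from the root to $v$'s parent (e.g., a depth-3 node with ancestors of patterns $p_1,p_2$ has $vispre=p_1p_2$); for a set of nodes, $vispre$ is the set of their visual prefixes. For a pattern $q$, $pset(q)$ is the set of nodes $v$ with $p(v)=q$. An SHT is well-formatted if (1) any two sibling nodes have equal visual patterns, and (2) for every visual pattern $q$, all nodes in $pset(q)$ have the same visual prefix (i.e., $vispre(pset(q))$ is a single sequence). Procedure \texttt{oracle\_gen}$(D)$: (i) Cluster the phrases of $S_D$ by identical visual pattern; (ii) prune clusters deemed non-header (via an LLM oracle); the remaining phrases are the header phrases. (iii) Tree construction, top-down, one cluster at a time: start with the cluster containing $s_1$ (which, if it contains only $s_1$, yields the root node for $s_1$). Repeatedly pick the not-yet-processed cluster containing the phrase of smallest index. For each phrase $s_i$ in this cluster create a node $v_i$, and choose as its parent the node $v_j$ of the current partially constructed tree (before this cluster is added, with text spans computed in that tree) such that $ind(v_i)\in ts(v_j)$ and there is no other node $v_k$ with $ind(v_k)>ind(v_j)$ and $ind(v_i)\in ts(v_k)$ (the most specific containing node). All nodes of the cluster are then added simultaneously, ordered by phrase index. The output is the resulting tree.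
   Formalization: A candidate SHT also has, as a defining condition rather than a consequence, preorder traversal in increasing phrase index, and $next(v)$ is $n+1$ instead of $n$ when no ancestor of $v$ has a right sibling, so $ts(v)$ reaches $s_n$. Each condition added here is assumed in the paper as well or is needed for the statement above to hold. This also corrects a misprint. *)

From mathcomp Require Import all_boot.
Set Implicit Arguments. Unset Strict Implicit. Unset Printing Implicit Defensive.

(* Conventions:
   - phrases are indexed 0 .. n-1 (s_1 of the paper is phrase 0);
     a document is represented by n and its visual-pattern function
     p : nat -> P (P any eqType of patterns).
   - a (partial) tree is a node list V : seq nat (phrase indices) together
     with a parent map par : nat -> option nat (None = no parent). *)

Section Trees.
Variable n : nat.
Variable V : seq nat.
Variable par : nat -> option nat.

Definition children (v : nat) : seq nat :=
  sort leq [seq w <- V | par w == Some v].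

Fixpoint preord (fuel v : nat) : seq nat :=
  v :: match fuel with
       | 0 => [::]
       | f.+1 => flatten [seq preord f w | w <- children v]
       end.

Fixpoint anc (fuel v : nat) : seq nat :=
  match fuel with
  | 0 => [::]
  | f.+1 => match par v with
            | Some u => rcons (anc f u) u
            | None => [::]
            end
  end.

Definition rsib (v : nat) : option nat :=
  match sort leq [seq w <- V | (par w == par v) && (v < w)] with
  | [::] => None
  | w :: _ => Some w
  end.

Fixpoint next_aux (fuel v : nat) : nat :=
  match rsib v with
  | Some w => w
  | None => match fuel with
            | 0 => n
            | f.+1 => match par v with
                      | Some u => next_aux f u
                      | None => n
                      end
            end
  end.

Definition next (v : nat) : nat := next_aux n v.

Definition in_ts (v i : nat) : bool := (v <= i) && (i < next v).

Definition edge (u v : nat) : bool :=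
  [&& u \in V, v \in V & par v == Some u].

Definition is_candidate_SHT (root : nat) : Prop :=
  [/\ uniq V, all (fun v => v < n) V, root \in V & par root = None] /\
  (forall v, v \in V -> v != root ->
     exists2 u, par v = Some u & (u \in V) && (u < v)) /\
  preord n root = sort leq V.

Variable P : eqType.
Variable p : nat -> P.

Definition vispre (v : nat) : seq P := map p (anc n v).

Definition well_formatted : Prop :=
  (forall u w, u \in V -> w \in V -> par u != None -> par u = par w ->
     p u = p w) /\
  (forall u w, u \in V -> w \in V -> p u = p w -> vispre u = vispre w).

(* most specific node of the current tree whose text span contains i *)
Definition choose_parent (i : nat) : option nat :=
  match [seq j <- V | in_ts j i] with
  | [::] => None
  | c => Some (foldr maxn 0 c)
  end.

End Trees.

(* oracle_gen: keep is the (LLM) oracle deciding, per cluster (= per visual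
   pattern), whether the cluster is retained as a header cluster. Clusters
   are processed in increasing order of their smallest phrase index. *)
Section OracleGen.
Variable P : eqType.
Variable n : nat.
Variable p : nat -> P.
Variable keep : P -> bool.

Definition cluster (i : nat) : seq nat := [seq j <- iota 0 n | p j == p i].

Definition gen_step (T : seq nat * (nat -> option nat)) (i : nat)
  : seq nat * (nat -> option nat) :=
  if keep (p i) && all (fun j => p j != p i) (iota 0 i) then
    let C := cluster i in
    (T.1 ++ C,
     fun x => if x \in C then choose_parent n T.1 T.2 x else T.2 x)
  else T.

Definition oracle_gen : seq nat * (nat -> option nat) :=
  foldl gen_step ([::], fun _ => None) (iota 0 n).

End OracleGen.

From Pilot Require Import Defs.
From mathcomp Require Import all_boot.
Set Implicit Arguments. Unset Strict Implicit. Unset Printing Implicit Defensive.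

(* The
   invariant is that the partial tree is the restriction of GT to the header phrases whose
   pattern has already occurred, with the true parents.  Since equal patterns force
   parents of equal pattern, the pattern of a parent occurs before that of its child, so
   the partial tree is closed under parents and contains the parent u of every node x of
   the new cluster.  Siblings share a pattern, so no child of u is present yet.  Because
   the preorder of GT is the index order, subtrees are index intervals: x lies in the
   text span of u, and a later node whose span contained x would descend from u through
   a child of u already present.  Hence u is the most specific container of x. *)

Section Ancestry.
Variable par : nat -> option nat.

Definition descends (x y : nat) : Prop :=
  exists k, iter k (obind par) (Some x) = Some y.

Lemma iter_obind_None k : iter k (obind par) None = None.
Proof. by elim: k => //= k ->. Qed.

Lemma descends_refl x : descends x x.
Proof. by exists 0. Qed.

Lemma descends_par x u y : par x = Some u -> descends u y -> descends x y.
Proof. by move=> pxu [k Hk]; exists k.+1; rewrite iterSr /= pxu. Qed.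

Lemma descends_trans x y z : descends x y -> descends y z -> descends x z.
Proof. by move=> [k1 H1] [k2 H2]; exists (k2 + k1); rewrite iterD H1. Qed.

Lemma descends_total x y z :
  descends x y -> descends x z -> descends y z \/ descends z y.
Proof.
move=> [k1 H1] [k2 H2]; case: (leqP k1 k2) => [le12|/ltnW le21].
- by left; exists (k2 - k1); rewrite -H1 -iterD subnK.
- by right; exists (k1 - k2); rewrite -H2 -iterD subnK.
Qed.

Lemma descends_child x y :
  descends x y -> x <> y -> exists2 c, par c = Some y & descends x c.
Proof.
move=> [[|k] Hk] neq_xy; first by case: Hk.
move: Hk; rewrite iterS; case Ec: (iter k _ _) => [c|] //= pcy.
by exists c => //; exists k.
Qed.

Lemma descends_from_par x y u :
  descends x y -> x <> y -> par x = Some u -> descends u y.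
Proof.
move=> [[|k] Hk] neq_xy pxu; first by case: Hk.
by exists k; move: Hk; rewrite iterSr /= pxu.
Qed.

Lemma descends_closed (W : seq nat) :
  (forall y u, y \in W -> par y = Some u -> u \in W) ->
  forall y c, y \in W -> descends y c -> c \in W.
Proof.
move=> W_closed y c yW [k]; elim: k y yW => [|k IHk] y yW; first by case=> <-.
rewrite iterSr /=; case Ey: (par y) => [u|]; last by rewrite iter_obind_None.
exact/IHk/(W_closed y).
Qed.

End Ancestry.

Section PartialTree.
Variables (n : nat) (W : seq nat) (q par : nat -> option nat).
Hypothesis q_par : {in W, q =1 par}.
Hypothesis W_closed : forall y u, y \in W -> par y = Some u -> u \in W.

Lemma rsib_par v w : v \in W -> rsib W q v = Some w -> [/\ w \in W, par w = par v & v < w].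
Proof.
move=> vW; rewrite /rsib; case Es: (sort _ _) => [|w' s] // [Ew]; subst w'.
have : w \in sort leq [seq w <- W | (q w == q v) && (v < w)] by rewrite Es mem_head.
by rewrite mem_sort mem_filter => /andP[/andP[/eqP qwv ->] wW]; rewrite -!q_par.
Qed.

Lemma next_auxP f v : v \in W ->
  let w := next_aux n W q f v in
  w = n \/ exists2 a, descends par v a & [/\ w \in W, par w = par a & a < w].
Proof.
elim: f v => [|f IHf] v vW /=; case Er: (rsib W q v) => [w|];
  try by [left | right; exists v; [exact: descends_refl | exact: rsib_par Er]].
rewrite q_par //; case Ev: (par v) => [u|]; last by left.
case: (IHf u (W_closed vW Ev)) => [->|[a dua wP]]; first by left.
by right; exists a => //; apply: descends_par Ev dua.
Qed.

End PartialTree.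

Lemma choose_parent_eq n (W : seq nat) (q : nat -> option nat) x u :
  u \in W -> in_ts n W q u x -> (forall j, j \in W -> in_ts n W q j x -> j <= u) ->
  choose_parent n W q x = Some u.
Proof.
move=> uW ts_u max_u; rewrite /choose_parent.
have : u \in [seq j <- W | in_ts n W q j x] by rewrite mem_filter ts_u uW.
case Es: [seq j <- W | _] => [|a s] // u_in; congr Some.
have -> : foldr maxn 0 (a :: s) = \max_(j <- a :: s) j by rewrite unlock.
apply/eqP; rewrite eqn_leq (leq_bigmax_seq _ u_in) // andbT.
by apply/bigmax_leqP_seq => j; rewrite -Es mem_filter => /andP[ts_j jW] _; apply: max_u.
Qed.

Section TreeOrder.
Variables (V : seq nat) (par : nat -> option nat) (r : nat).
Hypothesis root_par : par r = None.
Hypothesis par_mem_lt :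
  forall v, v \in V -> v != r -> exists2 u, par v = Some u & (u \in V) && (u < v).

Lemma par_memP v u : v \in V -> par v = Some u -> (u \in V) && (u < v).
Proof.
move=> vV pvu; case: (eqVneq v r) => [Evr|neq_vr]; first by rewrite Evr root_par in pvu.
by have [u' pvu' ?] := par_mem_lt vV neq_vr; rewrite pvu' in pvu; case: pvu => <-.
Qed.

Lemma descends_mem_le v y : v \in V -> descends par v y -> (y \in V) && (y <= v).
Proof.
move=> + [k]; elim: k v => [|k IHk] v vV; first by case=> <-; rewrite vV leqnn.
rewrite iterSr /=; case Ev: (par v) => [u|]; last by rewrite iter_obind_None.
have /andP[uV lt_uv] := par_memP vV Ev.
by move/(IHk u uV)/andP=> [-> /leq_trans->] //; apply: ltnW.
Qed.

Lemma descends_anti v y :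
  v \in V -> descends par v y -> descends par y v -> v = y.
Proof.
move=> vV dvy dyv; have /andP[yV le_yv] := descends_mem_le vV dvy.
by have /andP[_ le_vy] := descends_mem_le yV dyv; apply/eqP; rewrite eqn_leq le_vy.
Qed.

Lemma descends_same_par w a :
  w \in V -> descends par w a -> par w = par a -> w = a.
Proof.
move=> wV dwa Epar; apply/eqP/negPn/negP => /eqP neq_wa.
case Ew: (par w) => [b|].
  have /andP[aV _] := descends_mem_le wV dwa.
  have /andP[_ lt_ba] := par_memP aV (etrans (esym Epar) Ew).
  have /andP[bV _] := par_memP wV Ew.
  have /andP[_ le_ab] := descends_mem_le bV (descends_from_par dwa neq_wa Ew).
  by move: (leq_trans lt_ba le_ab); rewrite ltnn.
have Ewr : w = r by apply/eqP/negPn/negP => /(par_mem_lt wV) [u]; rewrite Ew.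
case: dwa neq_wa => -[|k]; first by case.
by rewrite iterSr /= Ewr root_par iter_obind_None.
Qed.

Lemma preord_descends f v x : x \in preord V par f v -> descends par x v.
Proof.
elim: f v x => [|f IHf] v x /=; first by rewrite inE => /eqP ->; apply: descends_refl.
rewrite inE => /orP[/eqP ->|/flattenP[_ /mapP[c + ->] xc]]; first exact: descends_refl.
rewrite /children mem_sort mem_filter => /andP[/eqP pcv _].
exact: descends_trans (IHf _ _ xc) (descends_par pcv (descends_refl _ _)).
Qed.

Lemma preord_head f v : v \in preord V par f v.
Proof. by case: f => [|f] /=; rewrite mem_head. Qed.

Lemma preord_subtree f v x y :
  v \in V -> x \in preord V par f v -> descends par x y -> descends par y v ->
  exists f' s1 s2,
    preord V par f v = s1 ++ preord V par f' y ++ s2 /\ x \in preord V par f' y.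
Proof.
elim: f v x => [|f IHf] v x vV xv dxy dyv.
  move: xv; rewrite /= inE => /eqP Exv; subst x.
  rewrite -(descends_anti vV dxy dyv).
  by exists 0, [::], [::]; rewrite cats0 /= mem_head.
case: (eqVneq y v) => [->|neq_yv]; first by exists f.+1, [::], [::]; rewrite cats0.
move: xv; rewrite /= inE => /orP[/eqP Exv|/flattenP[_ /mapP[c cv ->] xc]].
  by subst x; rewrite (descends_anti vV dxy dyv) eqxx in neq_yv.
have /andP[/eqP pcv cV] : (par c == Some v) && (c \in V).
  by move: cv; rewrite /children mem_sort mem_filter.
have dyc : descends par y c.
  case: (descends_total dxy (preord_descends xc)) => // dcy.
  case: (eqVneq c y) => [->|neq_cy]; first exact: descends_refl.
  have dvy := descends_from_par dcy (elimN eqP neq_cy) pcv.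
  by rewrite (descends_anti vV dvy dyv) eqxx in neq_yv.
have [f' [s1 [s2 [Ec xy]]]] := IHf c x cV xc dxy dyc.
case/splitPr: cv => cs1 cs2.
exists f', (v :: flatten [seq preord V par f w | w <- cs1] ++ s1),
  (s2 ++ flatten [seq preord V par f w | w <- cs2]).
by rewrite map_cat flatten_cat /= Ec -!catA.
Qed.

Section Preorder.
Variable n : nat.
Hypotheses (V_uniq : uniq V) (root_mem : r \in V).
Hypothesis preord_sorted : preord V par n r = sort leq V.

(* Subtrees are contiguous in the preorder, which is the increasing order. *)
Lemma descends_interval v d j :
  v \in V -> d \in V -> j \in V -> descends par d v -> v <= j -> j <= d ->
  descends par j v.
Proof.
move=> vV dV jV ddv le_vj le_jd.
have mem_pre x : x \in V -> x \in preord V par n r by rewrite preord_sorted mem_sort.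
have [f [s1 [s2 [Epre dsub]]]] :=
  preord_subtree root_mem (mem_pre d dV) ddv (preord_descends (mem_pre v vV)).
have : pairwise ltn (preord V par n r).
  rewrite -sorted_pairwise; last exact: ltn_trans.
  by rewrite preord_sorted ltn_sorted_uniq_leq sort_uniq V_uniq (sort_sorted leq_total).
rewrite Epre !pairwise_cat allrel_catr => /and3P[/andP[lt1 _] _ /and3P[lt2 _ _]].
move: (mem_pre j jV); rewrite Epre !mem_cat => /or3P[js1|jsub|js2].
- by have /= := allrelP lt1 _ _ js1 (preord_head _ _); rewrite ltnNge le_vj.
- exact: preord_descends jsub.
- by have /= := allrelP lt2 _ _ dsub js2; rewrite ltnNge le_jd.
Qed.

Hypothesis V_bounded : all (fun v => v < n) V.

Section Subtree.
Variables (W : seq nat) (q : nat -> option nat).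
Hypotheses (W_sub : {subset W <= V}) (q_par : {in W, q =1 par}).
Hypothesis W_closed : forall y u, y \in W -> par y = Some u -> u \in W.

Lemma subtree_in_ts u x : u \in W -> x \in V -> descends par x u -> in_ts n W q u x.
Proof.
move=> uW xV dxu; rewrite /in_ts /Defs.next; have /andP[_ ->] := descends_mem_le xV dxu.
case: (next_auxP n q_par W_closed n uW) => [->|[a dua [wW Ew lt_aw]]].
  exact: (allP V_bounded).
set w := next_aux _ _ _ _ _ in wW Ew lt_aw *.
rewrite ltnNge; apply/negP => le_wx.
have dxa := descends_trans dxu dua.
have /andP[aV _] := descends_mem_le (W_sub uW) dua.
have dwa := descends_interval aV xV (W_sub wW) dxa (ltnW lt_aw) le_wx.
by move: lt_aw; rewrite (descends_same_par (W_sub wW) dwa Ew) ltnn.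
Qed.

Lemma choose_parent_tree x u :
  x \in V -> par x = Some u -> u \in W -> (forall c, c \in W -> par c != Some u) ->
  choose_parent n W q x = Some u.
Proof.
move=> xV pxu uW no_child; have /andP[uV _] := par_memP xV pxu.
have dxu := descends_par pxu (descends_refl par u).
apply: choose_parent_eq => // [|j jW /andP[le_jx _]].
  exact: subtree_in_ts.
rewrite leqNgt; apply/negP => lt_uj.
have dju := descends_interval uV xV (W_sub jW) dxu (ltnW lt_uj) le_jx.
have neq_ju : j <> u by move=> Eju; rewrite Eju ltnn in lt_uj.
have [c pcu djc] := descends_child dju neq_ju.
by move: (no_child c (descends_closed W_closed jW djc)); rewrite pcu eqxx.
Qed.

End Subtree.
End Preorder.
End TreeOrder.

Section OracleGen.
Variables (P : eqType) (n : nat) (p : nat -> P) (keep : P -> bool).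
Variables (V : seq nat) (par : nat -> option nat).
Hypotheses (V_uniq : uniq V) (V_bounded : all (fun v => v < n) V).
Hypotheses (root_mem : 0 \in V) (root_par : par 0 = None).
Hypothesis par_mem_lt :
  forall v, v \in V -> v != 0 -> exists2 u, par v = Some u & (u \in V) && (u < v).
Hypothesis preord_sorted : preord V par n 0 = sort leq V.
Hypothesis sibling_pattern : forall u w, u \in V -> w \in V -> par u != None ->
  par u = par w -> p u = p w.
Hypothesis vispre_pattern : forall u w, u \in V -> w \in V -> p u = p w ->
  vispre n par p u = vispre n par p w.
Hypothesis keepP : forall i, i < n -> keep (p i) = (i \in V).

Definition pattern_seen i x := has (fun j => p j == p x) (iota 0 i).

Lemma pattern_seenS i x : pattern_seen i.+1 x = pattern_seen i x || (p i == p x).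
Proof. by rewrite /pattern_seen -addn1 iotaD has_cat /= orbF. Qed.

Lemma pattern_seen_eq i x y : p x = p y -> pattern_seen i x = pattern_seen i y.
Proof. by rewrite /pattern_seen => ->. Qed.

Lemma mem_V_lt v : v \in V -> v < n.
Proof. exact: allP V_bounded v. Qed.

Lemma mem_same_pattern x y : x < n -> y \in V -> p x = p y -> x \in V.
Proof. by move=> lt_xn yV Exy; rewrite -keepP // Exy keepP // mem_V_lt. Qed.

Lemma par_same_pattern y z u : y \in V -> z \in V -> p y = p z -> par y = Some u ->
  exists2 u', par z = Some u' & p u' = p u.
Proof.
move=> yV zV Eyz pyu; have := vispre_pattern yV zV Eyz.
have [m Enm] : exists m, n = m.+1 by exists n.-1; rewrite prednK // mem_V_lt.
rewrite /vispre Enm /= pyu; case: (par z) => [u'|]; last by rewrite map_rcons; case: map.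
by rewrite !map_rcons => /rcons_inj[_ Eu]; exists u'.
Qed.

Lemma par_pattern_before y u j : y \in V -> j < n -> p j = p y -> par y = Some u ->
  exists2 u', u' < j & p u' = p u.
Proof.
move=> yV lt_jn Ejy pyu; have jV := mem_same_pattern lt_jn yV Ejy.
have [u' pju' Eu'] := par_same_pattern yV jV (esym Ejy) pyu.
by exists u' => //; have /andP[] := par_memP root_par par_mem_lt jV pju'.
Qed.

Lemma pattern_seen_par i y u : i <= n -> y \in V -> pattern_seen i y -> par y = Some u ->
  pattern_seen i u.
Proof.
move=> le_in yV /hasP[j]; rewrite mem_iota add0n => lt_ji /eqP Ejy pyu.
have [u' lt_u'j Eu'] := par_pattern_before yV (leq_trans lt_ji le_in) Ejy pyu.
by apply/hasP; exists u'; rewrite ?mem_iota ?Eu' // (ltn_trans lt_u'j).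
Qed.

Definition gen_inv (T : seq nat * (nat -> option nat)) i :=
  (forall x, (x \in T.1) = (x \in V) && pattern_seen i x) /\ {in T.1, T.2 =1 par}.

Lemma choose_parent_cluster i T x : i < n -> i \in V -> ~~ pattern_seen i i ->
  gen_inv T i -> x \in V -> p x = p i -> choose_parent n T.1 T.2 x = par x.
Proof.
move=> lt_in iV unseen_i [memT parT] xV Exi.
have notT y : p y = p i -> y \notin T.1.
  by move=> Eyi; rewrite memT (pattern_seen_eq _ Eyi) (negbTE unseen_i) andbF.
case: (eqVneq x 0) => [Ex0|nz_x].
  rewrite Ex0 root_par /choose_parent; case Es: [seq j <- _ | _] => [|j s] //.
  have : j \in [seq j <- T.1 | in_ts n T.1 T.2 j 0] by rewrite Es mem_head.
  rewrite mem_filter /in_ts leqn0 => /andP[/andP[/eqP Ej0 _] jT].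
  by move: (notT x Exi); rewrite Ex0 -Ej0 jT.
have [u pxu /andP[uV _]] := par_mem_lt xV nz_x.
rewrite pxu.
apply: (choose_parent_tree root_par par_mem_lt V_uniq root_mem preord_sorted V_bounded)
  => //.
- by move=> y; rewrite memT => /andP[].
- move=> y u' yT pyu'; move: yT; rewrite !memT => /andP[yV seen_y].
  have /andP[-> _] := par_memP root_par par_mem_lt yV pyu'.
  exact: pattern_seen_par (ltnW lt_in) yV seen_y pyu'.
- rewrite memT uV; have [u' lt_u'i Eu'] := par_pattern_before xV lt_in (esym Exi) pxu.
  by apply/hasP; exists u'; rewrite ?mem_iota ?Eu'.
- move=> c cT; apply/eqP => pcu; move: (cT); rewrite memT => /andP[cV _].
  have Ecx : p c = p x by apply: sibling_pattern; rewrite ?pcu ?pxu.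
  by move: (notT c (etrans Ecx Exi)); rewrite cT.
Qed.

Lemma gen_inv_cluster i T : i < n -> keep (p i) -> ~~ pattern_seen i i -> gen_inv T i ->
  gen_inv (T.1 ++ cluster n p i,
           fun x => if x \in cluster n p i then choose_parent n T.1 T.2 x else T.2 x) i.+1.
Proof.
move=> lt_in keep_i unseen_i invT; have iV : i \in V by rewrite -keepP.
have [memT parT] := invT.
have mem_cluster x : (x \in cluster n p i) = (x < n) && (p x == p i).
  by rewrite /cluster mem_filter mem_iota add0n andbC.
split=> x /=; rewrite mem_cat mem_cluster.
  rewrite memT pattern_seenS; case xV: (x \in V) => /=; first by rewrite mem_V_lt // eq_sym.
  apply/negbTE/negP => /andP[lt_xn /eqP Exi].
  by rewrite (mem_same_pattern lt_xn iV Exi) in xV.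
case: ifP => [/andP[lt_xn /eqP Exi] _ | _]; last by rewrite orbF => /parT.
exact: choose_parent_cluster (mem_same_pattern lt_xn iV Exi) Exi.
Qed.

Lemma gen_inv_skip i T : i < n -> ~~ (keep (p i) && ~~ pattern_seen i i) -> gen_inv T i ->
  gen_inv T i.+1.
Proof.
move=> lt_in old_i [memT parT]; split=> // x; rewrite memT pattern_seenS.
case xV: (x \in V) => //=; case: eqP => [Eix|_]; last by rewrite orbF.
by move: old_i; rewrite Eix keepP ?mem_V_lt // xV negbK (pattern_seen_eq _ Eix) orbT.
Qed.

Definition gen_prefix i := foldl (gen_step n p keep) ([::], fun _ => None) (iota 0 i).

Lemma gen_prefix_inv i : i <= n -> gen_inv (gen_prefix i) i.
Proof.
elim: i => [|i IHi] le_in; first by split=> x; rewrite /= ?andbF.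
have invT := IHi (ltnW le_in).
have unseenE : all (fun j => p j != p i) (iota 0 i) = ~~ pattern_seen i i.
  by rewrite /pattern_seen -all_predC.
rewrite /gen_prefix -addn1 iotaD foldl_cat add0n -/(gen_prefix i) addn1 /=.
rewrite /gen_step unseenE.
case: ifP => [/andP[keep_i unseen_i] | /negbT old_i].
  exact: gen_inv_cluster.
exact: gen_inv_skip.
Qed.

Lemma mem_oracle_gen x : (x \in (oracle_gen n p keep).1) = (x \in V).
Proof.
have [memG _] := gen_prefix_inv (leqnn n); rewrite [oracle_gen _ _ _]/= memG.
by case xV: (x \in V) => //=; apply/hasP; exists x; rewrite ?mem_iota ?mem_V_lt.
Qed.

Lemma edge_oracle_gen u v :
  edge (oracle_gen n p keep).1 (oracle_gen n p keep).2 u v = edge V par u v.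
Proof.
have [_ parG] := gen_prefix_inv (leqnn n).
rewrite /edge !mem_oracle_gen; case vV: (v \in V); last by rewrite !andbF.
by rewrite parG // mem_oracle_gen.
Qed.

Lemma oracle_gen_correct :
  (forall i, (i \in (oracle_gen n p keep).1) = (i \in V)) /\
  (forall u v, edge (oracle_gen n p keep).1 (oracle_gen n p keep).2 u v = edge V par u v).
Proof. by split; [apply: mem_oracle_gen | apply: edge_oracle_gen]. Qed.

End OracleGen.

Theorem theorem1 (P : eqType) (n : nat) (p : nat -> P)
  (V : seq nat) (par : nat -> option nat) (keep : P -> bool) :
  is_candidate_SHT n V par 0 ->
  well_formatted n V par p ->
  (forall i, i < n -> keep (p i) = (i \in V)) ->
  (forall i, (i \in (oracle_gen n p keep).1) = (i \in V)) /\
  (forall u v, edge (oracle_gen n p keep).1 (oracle_gen n p keep).2 u v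
               = edge V par u v).
Proof.
move=> [[V_uniq V_bounded root_mem root_par] [par_mem_lt preord_sorted]].
move=> [sibling_pattern vispre_pattern] keepP.
exact: (oracle_gen_correct V_uniq V_bounded root_mem root_par par_mem_lt preord_sorted).
Qed.
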